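(* Let $\mathbf{S}\in\mathbb{R}^{d_v\times d_k}$ be a nonzero matrix with singular value decomposition $\mathbf{S}=\sum_{i=1}^{d}\sigma_i\mathbf{u}_i\mathbf{w}_i^\top$, $d=\min(d_k,d_v)$, $\sigma_1\ge\cdots\ge\sigma_d\ge0$ (so $\mathbf{w}_1\in\mathbb{R}^{d_k}$ is a unit right singular vector for the largest singular value $\sigma_1$). Let $\mathbf{q}^*\in\mathbb{R}^{d_k}$ (the pure query) and $\mathbf{n}\in\mathbb{R}^{d_k}$ (noise) be nonzero, let $\tilde{\mathbf{q}}=\mathbf{q}^*+\mathbf{n}$, $\mathbf{o}=\mathbf{S}\tilde{\mathbf{q}}$, $\mathbf{o}^*=\mathbf{S}\mathbf{q}^*$, and assume $\mathbf{o}^*\neq\mathbf{0}$. Define $\delta=|\mathbf{n}^\top\mathbf{w}_1|/\|\mathbf{n}\|_2$ and $\gamma=|\mathbf{q}^{*\top}\mathbf{w}_1|/\|\mathbf{q}^*\|_2$. Then $$\frac{\delta}{\sqrt{\operatorname{er}(\mathbf{S})}}\le\frac{\|\mathbf{o}-\mathbf{o}^*\|_2/\|\mathbf{o}^*\|_2}{\|\mathbf{n}\|_2/\|\mathbf{q}^*\|_2},$$ and, if $\gamma>0$, $$\frac{\|\mathbf{o}-\mathbf{o}^*\|_2/\|\mathbf{o}^*\|_2}{\|\mathbf{n}\|_2/\|\mathbf{q}^*\|_2}\le\frac{\sqrt{\operatorname{er}(\mathbf{S})}}{\gamma}.$$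
   Context: For a nonzero matrix $\mathbf{S}$ with singular values $\sigma_1\ge\sigma_2\ge\cdots\ge0$, the effective rank is $\operatorname{er}(\mathbf{S})=\|\mathbf{S}\|_F^2/\|\mathbf{S}\|_2^2=\sum_i\sigma_i^2/\sigma_1^2$. *)

From HB Require Import structures.
From mathcomp Require Import all_boot all_order all_algebra.
From mathcomp Require Import all_classical all_reals.
Set Implicit Arguments. Unset Strict Implicit. Unset Printing Implicit Defensive.
Import Order.TTheory GRing.Theory Num.Theory.
Local Open Scope ring_scope.
Local Open Scope classical_set_scope.

Definition vnorm (R : realType) (n : nat) (v : 'cV[R]_n) : R :=
  Num.sqrt (\sum_(i < n) v i 0 ^+ 2).

Definition vdot (R : realType) (n : nat) (v w : 'cV[R]_n) : R :=
  \sum_(i < n) v i 0 * w i 0.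

Definition frobnorm (R : realType) (m n : nat) (S : 'M[R]_(m, n)) : R :=
  Num.sqrt (\sum_(i < m) \sum_(j < n) S i j ^+ 2).

Definition specnorm (R : realType) (m n : nat) (S : 'M[R]_(m, n)) : R :=
  sup [set vnorm (S *m x) | x in [set x : 'cV[R]_n | vnorm x = 1]].

Definition effrank (R : realType) (m n : nat) (S : 'M[R]_(m, n)) : R :=
  frobnorm S ^+ 2 / specnorm S ^+ 2.

From HB Require Import structures.
From mathcomp Require Import all_boot all_order all_algebra.
From mathcomp Require Import all_classical all_reals.
From mathcomp Require Import ring.
Set Implicit Arguments. Unset Strict Implicit.
Import Order.TTheory GRing.Theory Num.Theory.
Local Open Scope ring_scope.
Local Open Scope classical_set_scope.

(* In the SVD basis [|S x|^2 = sum_i sigma_i^2 (w_i . x)^2], which lies between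
   [sigma_1^2 (w_1 . x)^2] and [sigma_1^2 |x|^2] (Bessel).  Hence [||S||_2 = sigma_1],
   and since [sigma_1 <= ||S||_F] we get [sqrt (er S) = ||S||_F / sigma_1 >= 1].
   The ratio to be bounded is the gain [|S n| / |n|] of the noise divided by the
   gain [|S q*| / |q*|] of the query; each gain lies between [sigma_1] times the
   cosine of its vector with [w_1] ([delta], resp. [gamma]) and [sigma_1], and
   dividing these bounds gives both inequalities. *)

Section GainRatio.
Variable R : realFieldType.

Lemma gain_ratio_lower (s F u v delta : R) :
  0 < v -> v <= s -> s <= F -> 0 <= delta -> s * delta <= u ->
  delta / (F / s) <= u / v.
Proof.
move=> v_gt0 le_vs le_sF delta_ge0 le_su.
have s_gt0 : 0 < s := lt_le_trans v_gt0 le_vs.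
have F_gt0 : 0 < F := lt_le_trans s_gt0 le_sF.
have u_ge0 : 0 <= u := le_trans (mulr_ge0 (ltW s_gt0) delta_ge0) le_su.
rewrite invf_div mulrA (mulrC delta).
apply: (le_trans (ler_wpM2r _ le_su)); first by rewrite invr_ge0 ltW.
by apply: ler_wpM2l => //; rewrite lef_pV2 ?posrE // (le_trans le_vs).
Qed.

Lemma gain_ratio_upper (s F u v gamma : R) :
  0 < s -> 0 < gamma -> s <= F -> 0 <= u -> u <= s -> s * gamma <= v ->
  u / v <= F / s / gamma.
Proof.
move=> s_gt0 gamma_gt0 le_sF u_ge0 le_us le_v.
have sg_gt0 : 0 < s * gamma := mulr_gt0 s_gt0 gamma_gt0.
apply: (@le_trans _ _ (s / (s * gamma))).
  apply: ler_pM => //; first by rewrite invr_ge0 (le_trans (ltW sg_gt0)).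
  by rewrite lef_pV2 ?posrE // (lt_le_trans sg_gt0).
rewrite invfM mulrA; apply: ler_wpM2r; first by rewrite invr_ge0 ltW.
by apply: ler_wpM2r => //; rewrite invr_ge0 ltW.
Qed.

End GainRatio.

Section EuclideanNorm.
Variable R : realType.
Implicit Types (k m : nat).

Lemma vdot_mx k (x y : 'cV[R]_k) : vdot x y = (x^T *m y) 0 0.
Proof. by rewrite mxE; apply: eq_bigr => i _; rewrite mxE. Qed.

Lemma vnormE k (x : 'cV[R]_k) : vnorm x = Num.sqrt (vdot x x).
Proof. by congr Num.sqrt; apply: eq_bigr => i _; rewrite expr2. Qed.

Lemma vdotxx_ge0 k (x : 'cV[R]_k) : 0 <= vdot x x.
Proof. by apply: sumr_ge0 => i _; rewrite -expr2 sqr_ge0. Qed.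

Lemma vnorm_ge0 k (x : 'cV[R]_k) : 0 <= vnorm x.
Proof. exact: sqrtr_ge0. Qed.

Lemma sqr_vnorm k (x : 'cV[R]_k) : vnorm x ^+ 2 = vdot x x.
Proof. by rewrite vnormE sqr_sqrtr // vdotxx_ge0. Qed.

Lemma vnorm_gt0 k (x : 'cV[R]_k) : x != 0 -> 0 < vnorm x.
Proof.
move=> x_neq0; rewrite lt_def vnorm_ge0 andbT; apply: contra x_neq0.
rewrite -sqrf_eq0 sqr_vnorm /vdot psumr_eq0 => [/allP x0|i _]; last first.
  by rewrite -expr2 sqr_ge0.
apply/eqP/matrixP => i j; rewrite !ord1 mxE.
by have := x0 i (mem_index_enum _); rewrite mulf_eq0 orbb => /eqP.
Qed.

Lemma vdot_orthomx m k (U : 'M[R]_(m, k)) (y z : 'cV[R]_k) :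
  U^T *m U = 1%:M -> vdot (U *m y) (U *m z) = vdot y z.
Proof. by move=> hU; rewrite !vdot_mx trmx_mul -mulmxA (mulmxA U^T) hU mul1mx. Qed.

Lemma vdot_diag_mx k (s : 'rV[R]_k) (y : 'cV[R]_k) :
  vdot (diag_mx s *m y) (diag_mx s *m y) = \sum_(i < k) s 0 i ^+ 2 * y i 0 ^+ 2.
Proof. by apply: eq_bigr => i _; rewrite mul_diag_mx mxE -expr2 exprMn. Qed.

(* [x] minus its projection [W (W^T x)] has squared norm [|x|^2 - |W^T x|^2]. *)
Lemma bessel_inequality m k (W : 'M[R]_(m, k)) (x : 'cV[R]_m) :
  W^T *m W = 1%:M -> vdot (W^T *m x) (W^T *m x) <= vdot x x.
Proof.
move=> hW; set y := W^T *m x.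
have := vdotxx_ge0 (x - W *m y).
suff -> : vdot (x - W *m y) (x - W *m y) = vdot x x - vdot y y by rewrite subr_ge0.
rewrite !vdot_mx (raddfB (@trmx R _ _)) !mulmxBl !mulmxBr.
have -> : x^T *m (W *m y) = y^T *m y by rewrite mulmxA /y trmx_mul trmxK.
have -> : (W *m y)^T *m x = y^T *m y by rewrite trmx_mul -mulmxA.
have -> : (W *m y)^T *m (W *m y) = y^T *m y.
  by rewrite trmx_mul -mulmxA (mulmxA W^T W) hW mul1mx.
by rewrite !mxE; ring.
Qed.

End EuclideanNorm.

Section SingularValueDecomposition.
Variables (R : realType) (dk dv d : nat) (S : 'M[R]_(dv, dk)).
Variables (sigma : 'rV[R]_d.+1) (U : 'M[R]_(dv, d.+1)) (W : 'M[R]_(dk, d.+1)).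
Hypotheses (hU : U^T *m U = 1%:M) (hW : W^T *m W = 1%:M).
Hypothesis hsig0 : forall i : 'I_d.+1, 0 <= sigma 0 i.
Hypothesis hsig_sorted : forall i j : 'I_d.+1, (i <= j)%N -> sigma 0 j <= sigma 0 i.
Hypothesis hsvd : S = U *m diag_mx sigma *m W^T.

Local Notation sigma1 := (sigma 0 ord0).
Local Notation w1 := (col ord0 W).

Lemma vdot_svd x :
  vdot (S *m x) (S *m x) = \sum_(i < d.+1) sigma 0 i ^+ 2 * (W^T *m x) i 0 ^+ 2.
Proof. by rewrite hsvd -!mulmxA vdot_orthomx // vdot_diag_mx. Qed.

Lemma vdot_w1 x : vdot x w1 = (W^T *m x) ord0 0.
Proof. by rewrite mxE; apply: eq_bigr => i _; rewrite !mxE mulrC. Qed.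

Lemma vnorm_w1 : vnorm w1 = 1.
Proof.
by rewrite vnormE vdot_w1 colE mulmxA hW mul1mx mxE eqxx sqrtr1.
Qed.

Lemma vnorm_svd_le x : vnorm (S *m x) <= sigma1 * vnorm x.
Proof.
rewrite -(ler_pXn2r (n := 2)) ?nnegrE ?mulr_ge0 ?vnorm_ge0 //.
rewrite exprMn !sqr_vnorm vdot_svd.
apply: (le_trans _ (ler_wpM2l (exprn_ge0 2 (hsig0 ord0)) (bessel_inequality x hW))).
rewrite mulr_sumr; apply: ler_sum => i _; rewrite -expr2.
apply: ler_wpM2r; first exact: sqr_ge0.
by rewrite ler_pXn2r ?nnegrE ?hsig0 // hsig_sorted.
Qed.

Lemma vnorm_svd_ge x : sigma1 * `|vdot x w1| <= vnorm (S *m x).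
Proof.
rewrite -(ler_pXn2r (n := 2)) ?nnegrE ?mulr_ge0 ?vnorm_ge0 //.
rewrite exprMn real_normK ?num_real // sqr_vnorm vdot_svd vdot_w1.
rewrite (bigD1 ord0) //= lerDl; apply: sumr_ge0 => i _.
by rewrite mulr_ge0 // sqr_ge0.
Qed.

Lemma vnorm_svd_w1 : vnorm (S *m w1) = sigma1.
Proof.
have w1_unit : vdot w1 w1 = 1 by rewrite -sqr_vnorm vnorm_w1 expr1n.
apply/eqP; rewrite eq_le.
have := vnorm_svd_le w1; rewrite vnorm_w1 mulr1 => ->.
by have := vnorm_svd_ge w1; rewrite w1_unit normr1 mulr1.
Qed.

Lemma specnorm_svd : specnorm S = sigma1.
Proof.
set E := [set vnorm (S *m x) | x in [set x | vnorm x = 1]].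
have E_sigma1 : E sigma1 by exists w1; [exact: vnorm_w1 | exact: vnorm_svd_w1].
have ub_sigma1 : ubound E sigma1.
  by move=> _ [x /= x1 <-]; rewrite -[sigma1]mulr1 -x1 vnorm_svd_le.
have sup_le : sup E <= sigma1 by apply: ge_sup => //; exists sigma1.
have le_sup : sigma1 <= sup E by apply: sup_upper_bound => //; split; exists sigma1.
by apply/eqP; rewrite eq_le sup_le le_sup.
Qed.

Lemma frobnorm_svd : frobnorm S ^+ 2 = \sum_(i < d.+1) sigma 0 i ^+ 2.
Proof.
rewrite sqr_sqrtr; last by do 2![apply: sumr_ge0 => ? _]; exact: sqr_ge0.
have -> : \sum_(i < dv) \sum_(j < dk) S i j ^+ 2 = \tr (S *m S^T).
  by apply: eq_bigr => i _; rewrite mxE; apply: eq_bigr => j _; rewrite mxE expr2.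
rewrite hsvd !trmx_mul trmxK tr_diag_mx -!mulmxA mxtrace_mulC (mulmxA W^T W) hW.
rewrite mul1mx -!mulmxA hU mulmx1 mul_diag_mx.
by apply: eq_bigr => i _; rewrite !mxE eqxx mulr1n expr2.
Qed.

Lemma sigma1_le_frobnorm : sigma1 <= frobnorm S.
Proof.
rewrite -(ler_pXn2r (n := 2)) ?nnegrE ?hsig0 ?sqrtr_ge0 // frobnorm_svd.
by rewrite (bigD1 ord0) //= lerDl; apply: sumr_ge0 => i _; exact: sqr_ge0.
Qed.

Lemma sqrt_effrank_svd : Num.sqrt (effrank S) = frobnorm S / sigma1.
Proof.
rewrite /effrank specnorm_svd -expr_div_n sqrtr_sqr ger0_norm //.
by rewrite divr_ge0 ?hsig0 ?sqrtr_ge0.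
Qed.

Lemma gain_svd_le x : x != 0 -> vnorm (S *m x) / vnorm x <= sigma1.
Proof. by move=> x_neq0; rewrite ler_pdivrMr ?vnorm_gt0 ?vnorm_svd_le. Qed.

Lemma gain_svd_ge x : x != 0 ->
  sigma1 * (`|vdot x w1| / vnorm x) <= vnorm (S *m x) / vnorm x.
Proof. by move=> x_neq0; rewrite mulrA ler_wpM2r ?invr_ge0 ?vnorm_ge0 ?vnorm_svd_ge. Qed.

End SingularValueDecomposition.

Unset Implicit Arguments.
Local Close Scope classical_set_scope.

Theorem theorem2p4 (R : realType) (dk dv d : nat)
  (hd : d.+1 = minn dk dv)
  (S : 'M[R]_(dv, dk)) (hS : S != 0)
  (sigma : 'rV[R]_d.+1) (U : 'M[R]_(dv, d.+1)) (W : 'M[R]_(dk, d.+1))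
  (hU : U^T *m U = 1%:M) (hW : W^T *m W = 1%:M)
  (hsig0 : forall i : 'I_d.+1, 0 <= sigma 0 i)
  (hsig_sorted : forall i j : 'I_d.+1, (i <= j)%N -> sigma 0 j <= sigma 0 i)
  (hsvd : S = U *m diag_mx sigma *m W^T)
  (qstar n : 'cV[R]_dk) (hq : qstar != 0) (hn : n != 0)
  (ho : S *m qstar != 0) :
  let w1 := col ord0 W in
  let qt := qstar + n in
  let o := S *m qt in
  let ostar := S *m qstar in
  let delta := `|vdot n w1| / vnorm n in
  let gamma := `|vdot qstar w1| / vnorm qstar in
  let ratio := (vnorm (o - ostar) / vnorm ostar) / (vnorm n / vnorm qstar) in
  delta / Num.sqrt (effrank S) <= ratio /\
  (0 < gamma -> ratio <= Num.sqrt (effrank S) / gamma).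
Proof.
move=> w1 qt o ostar delta gamma ratio.
have o_sub : o - ostar = S *m n by rewrite /o /qt mulmxDr addrAC subrr add0r.
have ratioE : ratio = (vnorm (S *m n) / vnorm n) / (vnorm ostar / vnorm qstar).
  by rewrite /ratio o_sub !invf_div mulrACA [RHS]mulrACA (mulrC (vnorm n)^-1).
have gain_n_le := gain_svd_le hU hW hsig0 hsig_sorted hsvd hn.
have gain_q_le := gain_svd_le hU hW hsig0 hsig_sorted hsvd hq.
have gain_n_ge : sigma 0 ord0 * delta <= vnorm (S *m n) / vnorm n :=
  gain_svd_ge hU hsig0 hsvd hn.
have gain_q_ge : sigma 0 ord0 * gamma <= vnorm ostar / vnorm qstar :=
  gain_svd_ge hU hsig0 hsvd hq.
have gain_q_gt0 : 0 < vnorm ostar / vnorm qstar by rewrite divr_gt0 ?vnorm_gt0.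
have sigma1_le := sigma1_le_frobnorm hU hW hsig0 hsvd.
rewrite ratioE (sqrt_effrank_svd hU hW hsig0 hsig_sorted hsvd); split.
  by apply: gain_ratio_lower; rewrite // divr_ge0 ?vnorm_ge0.
move=> gamma_gt0; apply: gain_ratio_upper; rewrite // ?divr_ge0 ?vnorm_ge0 //.
exact: lt_le_trans gain_q_le.
Qed.
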